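(* Let $\mathcal{D}$ be the set of $d\times d$ density matrices. For $u\in\mathbb{R}$, $\mu\in\{1,\ldots,m\}$ let $M_\mu^u\in\mathbb{C}^{d\times d}$ with $\sum_\mu(M_\mu^u)^\dagger M_\mu^u=\mathrm{I}$, such that (A1) $M_\mu^0=\sum_nc_{\mu,n}|n\rangle\langle n|$ in a fixed orthonormal basis $\{|n\rangle\}$; (A2) for all $n_1\neq n_2$ there is $\mu$ with $|c_{\mu,n_1}|^2\neq|c_{\mu,n_2}|^2$; (A3) each $u\mapsto M_\mu^u$ is $C^2$. For $(\rho,\beta)\in\mathcal{D}\times\mathbb{R}$ let $p_\mu=\mathrm{tr}(M_\mu^\beta\rho(M_\mu^\beta)^\dagger)$, $a_{\mu,n}=\langle n|M_\mu^\beta\rho(M_\mu^\beta)^\dagger|n\rangle$, and $$Q_1(\rho,\beta)=\sum_{n}\sum_{\mu,\nu:\,p_\mu p_\nu>0}\frac{p_\mu p_\nu}{4}\Big(\frac{a_{\mu,n}}{p_\mu}-\frac{a_{\nu,n}}{p_\nu}\Big)^2.$$ Let $\tilde u>0$. Then there exists $C>0$ such that for all $(\rho,\beta)\in\mathcal{D}\times[-\tilde u,\tilde u]$ with $Q_1(\rho,\beta)=0$, there exists $n\in\{1,\ldots,d\}$ with $\langle n|\rho|n\rangle\ge1-C|\beta|$. *)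

From HB Require Import structures.
From mathcomp Require Import all_boot all_order all_algebra.
From mathcomp Require Import all_classical all_reals.
From mathcomp Require Import topology normedtype derive.
From mathcomp Require Import complex.
Set Implicit Arguments. Unset Strict Implicit. Unset Printing Implicit Defensive.
Import Order.TTheory GRing.Theory Num.Theory.
Import numFieldNormedType.Exports.
Local Open Scope ring_scope.

Definition adjmx (R : realType) (p q : nat) (A : 'M[R[i]]_(p, q)) : 'M[R[i]]_(q, p) :=
  (map_mx Num.conj A)^T.

Definition braket (R : realType) (d : nat) (v : 'cV[R[i]]_d) (X : 'M[R[i]]_d) : R[i] :=
  (adjmx v *m X *m v) 0 0.

Definition density (R : realType) (d : nat) (rho : 'M[R[i]]_d) : Prop :=
  [/\ adjmx rho = rho,
      (forall v : 'cV[R[i]]_d, 0 <= braket v rho)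
    & \tr rho = 1].

Definition C2 (R : realType) (f : R -> R) : Prop :=
  [/\ (forall x, derivable f x 1),
      (forall x, derivable (derive1 f) x 1)
    & continuous (derive1n 2 f)].

Definition C2mx (R : realType) (d : nat) (F : R -> 'M[R[i]]_d) : Prop :=
  forall i j : 'I_d, C2 (fun u => complex.Re (F u i j)) /\ C2 (fun u => complex.Im (F u i j)).

Definition pr (R : realType) (d m : nat) (M : 'I_m -> R -> 'M[R[i]]_d)
  (rho : 'M[R[i]]_d) (beta : R) (mu : 'I_m) : R[i] :=
  \tr (M mu beta *m rho *m adjmx (M mu beta)).

(* a_{mu,n} = <n| M rho M^dagger |n>, with |n> = n-th column of U *)
Definition amp (R : realType) (d m : nat) (U : 'M[R[i]]_d) (M : 'I_m -> R -> 'M[R[i]]_d)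
  (rho : 'M[R[i]]_d) (beta : R) (mu : 'I_m) (n : 'I_d) : R[i] :=
  braket (col n U) (M mu beta *m rho *m adjmx (M mu beta)).

Definition Q1 (R : realType) (d m : nat) (U : 'M[R[i]]_d) (M : 'I_m -> R -> 'M[R[i]]_d)
  (rho : 'M[R[i]]_d) (beta : R) : R[i] :=
  \sum_(n < d) \sum_(mu < m) \sum_(nu < m | 0 < pr M rho beta mu * pr M rho beta nu)
    (pr M rho beta mu * pr M rho beta nu / 4) *
    (amp U M rho beta mu n / pr M rho beta mu - amp U M rho beta nu n / pr M rho beta nu) ^+ 2.

(* Write q_n = <n|rho|n> and a_{mu,n} for the populations after outcome mu.  All terms
   of Q1 are nonnegative, so Q1 = 0 makes the conditional populations a_{mu,n}/p_mu
   independent of mu; hence a_{mu,n} = p_mu r_n with r_n = sum_mu a_{mu,n}, and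
   a_{mu,k} r_k' = a_{mu,k'} r_k.  At beta = 0 the Kraus operators are diagonal in the
   basis U, so a_{mu,k} = |c_{mu,k}|^2 q_k, and since they are C^2 this holds up to
   O(|beta|) uniformly for |beta| <= ut.  Substituting into the cross identity gives
   q_k q_k' (|c_{mu,k}|^2 - |c_{mu,k'}|^2) = O(|beta|); summing over mu and using the
   separation (A2), q_k q_k' = O(|beta|) for k <> k'.  Taking k' with q_k' >= 1/d, all
   other populations are O(|beta|), so q_k' >= 1 - C |beta| because tr rho = 1. *)

From mathcomp Require Import all_boot all_order all_algebra.
From mathcomp Require Import all_classical all_reals.
From mathcomp Require Import topology normedtype derive.
From mathcomp Require Import complex.
From mathcomp Require Import ring.
Import Order.TTheory GRing.Theory Num.Theory.
Import numFieldNormedType.Exports.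
Set Implicit Arguments. Unset Strict Implicit. Unset Printing Implicit Defensive.
Local Open Scope ring_scope.
Local Open Scope complex_scope.

Section EntrywiseL1Norm.
Variable K : numDomainType.

Definition l1mx (p q : nat) (A : 'M[K]_(p, q)) : K := \sum_i \sum_j `|A i j|.

Lemma l1mx_ge0 p q (A : 'M[K]_(p, q)) : 0 <= l1mx A.
Proof. by apply: sumr_ge0 => i _; apply: sumr_ge0. Qed.

Lemma ler_norm_l1mx p q (A : 'M[K]_(p, q)) i j : `|A i j| <= l1mx A.
Proof.
rewrite /l1mx (bigD1 i) //= (bigD1 j) //= -addrA lerDl.
by rewrite addr_ge0 //; apply: sumr_ge0 => *; rewrite ?sumr_ge0.
Qed.

Lemma l1mxD p q (A B : 'M[K]_(p, q)) : l1mx (A + B) <= l1mx A + l1mx B.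
Proof.
rewrite /l1mx -big_split /=; apply: ler_sum => i _; rewrite -big_split /=.
by apply: ler_sum => j _; rewrite mxE ler_normD.
Qed.

Lemma l1mxM p q r (A : 'M[K]_(p, q)) (B : 'M[K]_(q, r)) :
  l1mx (A *m B) <= l1mx A * l1mx B.
Proof.
rewrite /l1mx mulr_suml.
apply: (@le_trans _ _ (\sum_i \sum_k \sum_j `|A i k| * `|B k j|)).
  apply: ler_sum => i _; rewrite exchange_big /=; apply: ler_sum => j _.
  rewrite mxE; apply: (le_trans (ler_norm_sum _ _ _)).
  by apply: ler_sum => k _; rewrite normrM.
apply: ler_sum => i _; rewrite mulr_suml; apply: ler_sum => k _.
rewrite mulr_sumr (bigD1 k) //= mulr_sumr lerDl.
by apply: sumr_ge0 => k' _; rewrite mulr_sumr; apply: sumr_ge0 => j _; rewrite mulr_ge0.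
Qed.

End EntrywiseL1Norm.

Section Adjoint.
Variable R : realType.

Lemma adjmxD p q (A B : 'M[R[i]]_(p, q)) : adjmx (A + B) = adjmx A + adjmx B.
Proof. by rewrite /adjmx map_mxD linearD. Qed.

Lemma adjmxB p q (A B : 'M[R[i]]_(p, q)) : adjmx (A - B) = adjmx A - adjmx B.
Proof. by rewrite /adjmx map_mxB linearB. Qed.

Lemma adjmxZ p q (a : R[i]) (A : 'M[R[i]]_(p, q)) :
  adjmx (a *: A) = Num.conj a *: adjmx A.
Proof. by rewrite /adjmx map_mxZ linearZ. Qed.

Lemma adjmxM p q r (A : 'M[R[i]]_(p, q)) (B : 'M[R[i]]_(q, r)) :
  adjmx (A *m B) = adjmx B *m adjmx A.
Proof. by rewrite /adjmx map_mxM trmx_mul. Qed.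

Lemma adjmxK p q (A : 'M[R[i]]_(p, q)) : adjmx (adjmx A) = A.
Proof. by apply/matrixP => i j; rewrite /adjmx !mxE conjCK. Qed.

Lemma adjmx_sum p q (I : finType) (F : I -> 'M[R[i]]_(p, q)) :
  adjmx (\sum_i F i) = \sum_i adjmx (F i).
Proof. by rewrite /adjmx raddf_sum linear_sum. Qed.

Lemma l1mx_adj p q (A : 'M[R[i]]_(p, q)) : l1mx (adjmx A) = l1mx A.
Proof.
rewrite /l1mx exchange_big; apply: eq_bigr => i _; apply: eq_bigr => j _.
by rewrite /adjmx !mxE norm_conjC.
Qed.

Lemma adjmx_col (d : nat) (U : 'M[R[i]]_d) n : adjmx (col n U) = row n (adjmx U).
Proof. by apply/matrixP => i j; rewrite /adjmx !mxE. Qed.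

End Adjoint.

Section Braket.
Variables (R : realType) (d : nat).
Implicit Types (v w : 'cV[R[i]]_d) (X : 'M[R[i]]_d).

Lemma braket_mul_adj v X (A : 'M[R[i]]_d) :
  braket v (A *m X *m adjmx A) = braket (adjmx A *m v) X.
Proof. by rewrite /braket adjmxM adjmxK !mulmxA. Qed.

Lemma braketZ (a : R[i]) v X : braket (a *: v) X = Num.conj a * a * braket v X.
Proof. by rewrite /braket adjmxZ -!scalemxAl -scalemxAr !mxE mulrA. Qed.

Lemma braket_sum v (I : finType) (F : I -> 'M[R[i]]_d) :
  braket v (\sum_i F i) = \sum_i braket v (F i).
Proof. by rewrite /braket mulmx_sumr mulmx_suml summxE. Qed.

Lemma braket_col (U : 'M[R[i]]_d) n X :
  braket (col n U) X = (adjmx U *m X *m U) n n.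
Proof.
rewrite /braket adjmx_col -row_mul [RHS]mxE mxE.
by apply: eq_bigr => k _; rewrite !mxE.
Qed.

Lemma braket_delta X j k :
  (adjmx (delta_mx j 0 : 'cV[R[i]]_d) *m X *m (delta_mx k 0 : 'cV_d)) 0 0 = X j k.
Proof.
have -> : adjmx (delta_mx j 0 : 'cV[R[i]]_d) = delta_mx 0 j.
  by apply/matrixP => a b; rewrite /adjmx !mxE rmorph_nat andbC.
by rewrite -(rowE j X) -colE !mxE.
Qed.

Lemma braketD_vec v w X : braket (v + w) X =
  braket v X + (adjmx v *m X *m w) 0 0 + ((adjmx w *m X *m v) 0 0 + braket w X).
Proof. by rewrite /braket adjmxD !mulmxDl !mulmxDr [LHS]mxE [_ 0 0]mxE [X in _ + X]mxE. Qed.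

Lemma l1mx_braketB v w X :
  `|braket v X - braket w X| <= l1mx (v - w) * l1mx X * (l1mx v + l1mx w).
Proof.
have -> : braket v X - braket w X =
    (adjmx (v - w) *m X *m v + adjmx w *m X *m (v - w)) 0 0.
  by rewrite /braket adjmxB !mulmxBl mulmxBr addrA subrK !mxE.
apply: (le_trans (ler_norm_l1mx _ _ _)); apply: (le_trans (l1mxD _ _)).
rewrite mulrDr lerD //.
  apply: (le_trans (l1mxM _ _)); rewrite ler_wpM2r ?l1mx_ge0 //.
  by apply: (le_trans (l1mxM _ _)); rewrite l1mx_adj.
rewrite mulrC [l1mx (v - w) * _]mulrC mulrA.
apply: (le_trans (l1mxM _ _)); rewrite ler_wpM2r ?l1mx_ge0 //.
by apply: (le_trans (l1mxM _ _)); rewrite l1mx_adj.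
Qed.

Variable U : 'M[R[i]]_d.
Hypothesis unitaryU : adjmx U *m U = 1%:M.

Lemma adjmx_col_mul_col j k : adjmx (col j U) *m col k U = ((j == k)%:R)%:M.
Proof.
apply/matrixP => a b; rewrite !ord1.
have -> : (adjmx (col j U) *m col k U) 0 0 = (adjmx U *m U) j k.
  by rewrite adjmx_col [RHS]mxE mxE; apply: eq_bigr => l _; rewrite !mxE.
by rewrite unitaryU !mxE eqxx mulr1n eq_sym.
Qed.

Lemma mxtrace_braket X : \tr X = \sum_n braket (col n U) X.
Proof.
under eq_bigr do rewrite braket_col.
rewrite -[RHS]/(\tr (adjmx U *m X *m U)) mxtrace_mulC mulmxA.
by rewrite (mulmx1C unitaryU) mul1mx.
Qed.

Lemma braket_col1 n : braket (col n U) 1%:M = 1.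
Proof. by rewrite braket_col mulmx1 unitaryU mxE eqxx. Qed.

Lemma diag_mul_col (c : 'I_d -> R[i]) n :
  (\sum_k c k *: (col k U *m adjmx (col k U))) *m col n U = c n *: col n U.
Proof.
rewrite mulmx_suml (bigD1 n) //= big1 ?addr0 => [|k hk];
  rewrite -scalemxAl -mulmxA adjmx_col_mul_col mul_mx_scalar ?eqxx ?scale1r //.
by rewrite (negbTE hk) !scale0r scaler0.
Qed.

Lemma adj_diag_mul_col (c : 'I_d -> R[i]) n :
  adjmx (\sum_k c k *: (col k U *m adjmx (col k U))) *m col n U =
  Num.conj (c n) *: col n U.
Proof.
rewrite adjmx_sum (eq_bigr (fun k => Num.conj (c k) *: (col k U *m adjmx (col k U)))).
  exact: diag_mul_col.
by move=> k _; rewrite adjmxZ adjmxM adjmxK.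
Qed.

End Braket.

Section DensityMatrix.
Variables (R : realType) (d : nat) (rho : 'M[R[i]]_d).
Hypothesis hrho : density rho.

Lemma density_diag_ge0 j : 0 <= rho j j.
Proof. by case: hrho => _ h _; rewrite -braket_delta; apply: h. Qed.

Lemma density_diag_le1 j : rho j j <= 1.
Proof.
case: hrho => _ _ <-; rewrite /mxtrace (bigD1 j) //= lerDl.
by apply: sumr_ge0 => k _; apply: density_diag_ge0.
Qed.

Lemma density_entry_le1 j k : `|rho j k| <= 1.
Proof.
have [->|_] := eqVneq j k.
  by rewrite ger0_norm ?density_diag_ge0 ?density_diag_le1.
case: hrho => herm pos _; set z := rho j k.
have rho_kj : rho k j = Num.conj z by rewrite -herm /adjmx !mxE.
(* positivity on  e_j - conj(z) e_k  gives  rho_jj + |z|^2 rho_kk - 2|z|^2 >= 0 *)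
have := pos (delta_mx j 0 - Num.conj z *: delta_mx k 0).
rewrite braketD_vec -scaleNr braketZ /braket !braket_delta -scalemxAr mxE.
rewrite braket_delta adjmxZ -!scalemxAl mxE braket_delta rho_kj -/z.
rewrite !rmorphN /= conjCK mulrNN !mulNr (mulrC (Num.conj z) z) -normCK => h.
have : rho j j - `|z| ^+ 2 + (- `|z| ^+ 2 + `|z| ^+ 2 * rho k k) <= 1 - `|z| ^+ 2.
  rewrite -[X in _ <= X]addr0 -(addNr (`|z| ^+ 2)) lerD ?lerD2r ?density_diag_le1 //.
  by rewrite lerD2l ler_piMr ?exprn_ge0 ?density_diag_le1.
by move/(le_trans h); rewrite subr_ge0 => ?; rewrite -(@expr_le1 _ 2).
Qed.

Lemma l1mx_density : l1mx rho <= (d * d)%:R.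
Proof.
apply: (@le_trans _ _ (\sum_(i < d) \sum_(j < d) (1 : R[i]))).
  by apply: ler_sum => i _; apply: ler_sum => j _; apply: density_entry_le1.
by rewrite !sumr_const !card_ord -mulrnA.
Qed.

End DensityMatrix.

Lemma finite_uniform_bound (F : numDomainType) (T : finType) (P : T -> F -> Prop) :
  (forall t L L', P t L -> L <= L' -> P t L') ->
  (forall t, exists L, 0 <= L /\ P t L) -> exists L, 0 <= L /\ forall t, P t L.
Proof.
move=> mono /choice[f hf]; exists (\sum_t f t); split.
  by apply: sumr_ge0 => t _; case: (hf t).
move=> t; apply: (mono t (f t)); first by case: (hf t).
by rewrite (bigD1 t) //= lerDl; apply: sumr_ge0 => s _; case: (hf s).
Qed.

Lemma finite_pos_lower_bound (F : realDomainType) (T : finType) (P : pred T) (f : T -> F) :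
  (forall t, P t -> 0 < f t) -> exists δ, 0 < δ /\ forall t, P t -> δ <= f t.
Proof.
move=> f_gt0; exists (\big[Num.min/1]_(t | P t) f t); split.
  by apply: (big_ind (fun x => 0 < x)) => // x y hx hy; rewrite lt_min hx hy.
by move=> t Pt; rewrite (bigD1 t) //= ge_min lexx.
Qed.

Section Lipschitz.
Variable R : realType.

Lemma derivable_lipschitz0 (f : R -> R) (r : R) : 0 <= r ->
  (forall x, derivable f x 1) -> continuous (derive1 f) ->
  exists L, 0 <= L /\ forall x, - r <= x <= r -> `|f x - f 0| <= L * `|x|.
Proof.
move=> r0 df cdf.
have hle : - r <= r by rewrite (le_trans _ r0) // oppr_le0.
have [c _ hmax] := EVT_max hle
  (continuous_subspaceT (fun x => continuous_comp (cdf x) (@norm_continuous _ _ _))).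
exists `|derive1 f c|; split => // x /andP[xr1 xr2].
have f_is_derive (x' : R) : is_derive x' 1 f (derive1 f x').
  by rewrite derive1E; exact: derivableP.
have cf a b : {within `[a, b], continuous f}%classic.
  apply: continuous_subspaceT => y.
  exact: differentiable_continuous (proj1 (derivable1_diffP _ _) (df y)).
have in_range (z a b : R) : - r <= a -> b <= r -> z \in `]a, b[ -> z \in `[- r, r].
  move=> ha hb; rewrite !in_itv /= => /andP[h1 h2].
  by rewrite (le_trans ha (ltW h1)) (le_trans (ltW h2)).
case: (ltgtP x 0) => [x_lt0|x_gt0|->]; last by rewrite subrr normr0 mulr0.
- rewrite distrC; have [z hz ->] := MVT x_lt0 (fun y _ => f_is_derive y) (cf x 0).
  rewrite sub0r normrM normrN ler_wpM2r //; apply: hmax.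
  exact: in_range hz.
- have [z hz ->] := MVT x_gt0 (fun y _ => f_is_derive y) (cf 0 x).
  rewrite subr0 normrM ler_wpM2r //; apply: hmax.
  by apply: in_range hz; rewrite // oppr_le0.
Qed.

Lemma C2_lipschitz0 (f : R -> R) (r : R) : 0 <= r -> C2 f ->
  exists L, 0 <= L /\ forall x, - r <= x <= r -> `|f x - f 0| <= L * `|x|.
Proof.
move=> r0 [df ddf _]; apply: (derivable_lipschitz0 r0 df) => x.
exact: differentiable_continuous (proj1 (derivable1_diffP _ _) (ddf x)).
Qed.

Lemma norm_real_complex (x : R) : `|x%:C| = `|x|%:C.
Proof. by rewrite normc_def /= expr0n /= addr0 sqrtr_sqr. Qed.

Lemma C2_complex_lipschitz0 (F : R -> R[i]) (r : R) : 0 <= r ->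
  C2 (fun u => complex.Re (F u)) -> C2 (fun u => complex.Im (F u)) ->
  exists L, 0 <= L /\ forall x, - r <= x <= r -> `|F x - F 0| <= (L * `|x|)%:C.
Proof.
move=> r0 /(C2_lipschitz0 r0)[L1 [L1_ge0 hL1]] /(C2_lipschitz0 r0)[L2 [L2_ge0 hL2]].
exists (L1 + L2); split => [|x hx]; first exact: addr_ge0.
rewrite [F x - F 0]complexE; apply: (le_trans (ler_normD _ _)).
rewrite normrM normCi mul1r !norm_real_complex mulrDl rmorphD /= lerD // lecR.
  by rewrite raddfB; apply: hL1.
by rewrite raddfB; apply: hL2.
Qed.

Lemma C2mx_lipschitz0 (d : nat) (F : R -> 'M[R[i]]_d) (r : R) : 0 <= r -> C2mx F ->
  exists L, 0 <= L /\ forall x, - r <= x <= r -> l1mx (F x - F 0) <= (L * `|x|)%:C.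
Proof.
move=> r0 C2F.
pose P (ij : 'I_d * 'I_d) L := forall x, - r <= x <= r ->
  `|F x ij.1 ij.2 - F 0 ij.1 ij.2| <= (L * `|x|)%:C.
have [|[i j]|L [L0 hL]] := @finite_uniform_bound _ _ P.
- move=> t L L' hPL hLL' x hx; apply: (le_trans (hPL x hx)).
  by rewrite lecR ler_wpM2r.
- have [hRe hIm] := C2F i j.
  exact: (C2_complex_lipschitz0 (F := fun u => F u i j) r0 hRe hIm).
exists ((d * d)%:R * L); split => [|x hx]; first by rewrite mulr_ge0.
apply: (@le_trans _ _ (\sum_(i < d) \sum_(j < d) (L * `|x|)%:C)).
  by apply: ler_sum => i _; apply: ler_sum => j _; rewrite !mxE; apply: (hL (i, j) x hx).
rewrite !sumr_const !card_ord -mulrnA -rmorphMn /= lecR.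
by rewrite mulrnAl mul1r mulrnAl.
Qed.

End Lipschitz.

Lemma exists_ge_average (F : numFieldType) (d : nat) (q : 'I_d -> F) :
  (forall k, 0 <= q k) -> \sum_k q k = 1 -> exists n, 1 <= d%:R * q n.
Proof.
move=> q_ge0 sum_q; have d_gt0 : (0 < d)%N.
  by case: d q q_ge0 sum_q => // q _; rewrite big_ord0 => /eqP; rewrite eq_sym oner_eq0.
apply/not_existsP => small.
have : \sum_(k < d) d%:R * q k < \sum_(k < d) 1.
  apply: ltr_sum => [|k _]; first by apply/hasP; exists (Ordinal d_gt0); rewrite ?mem_index_enum.
  rewrite real_ltNge ?real1 ?ger0_real ?mulr_ge0 //; exact/negP/small.
by rewrite -mulr_sumr sum_q mulr1 sumr_const card_ord ltxx.
Qed.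

Section Concentration.
Variables (F : numFieldType) (d m : nat) (q : 'I_d -> F) (A al : 'I_m -> 'I_d -> F).
Variable e : F.
Hypotheses (q_ge0 : forall k, 0 <= q k) (sum_q : \sum_k q k = 1).
Hypothesis A_in01 : forall mu k, 0 <= A mu k <= 1.
Hypothesis sum_al : forall k, \sum_mu al mu k = 1.
Hypothesis A_near : forall mu k, `|A mu k - al mu k * q k| <= e.
Hypothesis A_cross : forall mu k k', A mu k * \sum_nu A nu k' = A mu k' * \sum_nu A nu k.

Lemma sum_A_near k : `|\sum_nu A nu k - q k| <= m%:R * e.
Proof.
have -> : q k = \sum_nu al nu k * q k by rewrite -mulr_suml sum_al mul1r.
rewrite -sumrB.
apply: (le_trans (ler_norm_sum _ _ _)).
apply: (@le_trans _ _ (\sum_(nu < m) e)); first by apply: ler_sum => nu _; apply: A_near.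
by rewrite sumr_const card_ord mulr_natl.
Qed.

Lemma cross_defect_le mu k k' :
  `|q k * q k' * (al mu k - al mu k')| <= 2 * (1 + m%:R) * e.
Proof.
set x := A mu k; set y := A mu k'.
set s := \sum_nu A nu k; set s' := \sum_nu A nu k'.
(* The last summand vanishes by [A_cross]; each of the others is [O(e)]. *)
have -> : q k * q k' * (al mu k - al mu k') =
    (al mu k * q k - x) * q k' + x * (q k' - s') - (al mu k' * q k' - y) * q k
    - y * (q k - s) + (x * s' - y * s) by ring.
rewrite /x /y /s /s' A_cross subrr addr0.
have q_le1 j : q j <= 1.
  by rewrite -sum_q (bigD1 j) //= lerDl sumr_ge0.
have part1 j j' mu' : `|(al mu' j * q j - A mu' j) * q j'| <= e.
  rewrite normrM distrC -[e]mulr1 ler_pM ?normr_ge0 ?A_near //.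
  by rewrite ger0_norm ?q_le1.
have part2 j j' mu' : `|A mu' j * (q j' - \sum_nu A nu j')| <= m%:R * e.
  rewrite normrM distrC -[_ * e]mul1r ler_pM ?normr_ge0 ?sum_A_near //.
  by case/andP: (A_in01 mu' j) => ? ?; rewrite ger0_norm.
have -> : 2 * (1 + m%:R) * e = e + m%:R * e + e + m%:R * e by ring.
apply: (le_trans (ler_normB _ _)); rewrite lerD //.
apply: (le_trans (ler_normB _ _)); rewrite lerD //.
by apply: (le_trans (ler_normD _ _)); rewrite lerD.
Qed.

Lemma concentration (δ : F) : 0 < δ ->
  (forall k k', k != k' -> δ <= \sum_mu `|al mu k - al mu k'|) ->
  exists n, 1 - 2 * (d * d * m * (1 + m))%:R / δ * e <= q n.
Proof.
move=> δ_gt0 sep; have [ns ns_large] := exists_ge_average q_ge0 sum_q.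
have e_ge0 : 0 <= e.
  case: (pickP (@predT 'I_m)) => [mu _|no_mu].
    exact: le_trans (normr_ge0 _) (A_near mu ns).
  by move: (sum_al ns); rewrite big_pred0 // => /eqP; rewrite eq_sym oner_eq0.
set B := 2 * (d * m * (1 + m))%:R / δ * e.
have B_ge0 : 0 <= B by rewrite !mulr_ge0 // invr_ge0 ltW.
have others_small k : k != ns -> q k <= B.
  move=> k_ns.
  have defect : q k * q ns * δ <= m%:R * (2 * (1 + m%:R) * e).
    apply: (@le_trans _ _ (\sum_mu `|q k * q ns * (al mu k - al mu ns)|)).
      under eq_bigr do rewrite normrM ger0_norm ?mulr_ge0 //.
      by rewrite -mulr_sumr ler_wpM2l ?mulr_ge0 ?sep.
    apply: (@le_trans _ _ (\sum_(mu < m) (2 * (1 + m%:R) * e))).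
      by apply: ler_sum => mu _; apply: cross_defect_le.
    by rewrite sumr_const card_ord [m%:R * _]mulr_natl.
  have : q k * δ <= d%:R * (q k * q ns * δ).
    have -> : d%:R * (q k * q ns * δ) = q k * δ * (d%:R * q ns) by ring.
    by rewrite ler_peMr // mulr_ge0 // ltW.
  move/le_trans/(_ (ler_wpM2l (ler0n _ d) defect)) => kδ_small.
  rewrite /B mulrAC ler_pdivlMr //; apply: (le_trans kδ_small).
  suff -> : 2 * (d * m * (1 + m))%:R * e = d%:R * (m%:R * (2 * (1 + m%:R) * e)) by [].
  by rewrite !natrM natrD; ring.
exists ns.
have : \sum_(k < d | k != ns) q k <= d%:R * B.
  apply: (@le_trans _ _ (\sum_(k < d | k != ns) B)); first exact: ler_sum.
  apply: (@le_trans _ _ (\sum_(k < d) B)); first by rewrite [leRHS](bigD1 ns) //= lerDr.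
  by rewrite sumr_const card_ord mulr_natl.
have split_q : q ns + \sum_(k < d | k != ns) q k = 1 by rewrite -sum_q [RHS](bigD1 ns).
rewrite -(lerD2l (q ns)) split_q -lerBlDr.
suff -> : d%:R * B = 2 * (d * d * m * (1 + m))%:R / δ * e by [].
by rewrite /B !natrM; ring.
Qed.

End Concentration.

Section Measurement.
Variables (R : realType) (d m : nat) (M : 'I_m -> R -> 'M[R[i]]_d) (U : 'M[R[i]]_d).
Hypothesis unitaryU : adjmx U *m U = 1%:M.
Hypothesis completeM : forall u, \sum_mu adjmx (M mu u) *m M mu u = 1%:M.
Variables (rho : 'M[R[i]]_d) (beta : R).
Hypothesis hrho : density rho.
Local Notation a := (amp U M rho beta).
Local Notation p := (pr M rho beta).

Lemma amp_ge0 mu n : 0 <= a mu n.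
Proof. by rewrite /amp braket_mul_adj; case: hrho. Qed.

Lemma pr_sum_amp mu : p mu = \sum_n a mu n.
Proof. exact: mxtrace_braket. Qed.

Lemma amp_le_pr mu n : a mu n <= p mu.
Proof. by rewrite pr_sum_amp (bigD1 n) //= lerDl sumr_ge0 // => k _; apply: amp_ge0. Qed.

Lemma sum_pr : \sum_mu p mu = 1.
Proof.
transitivity (\tr (\sum_mu adjmx (M mu beta) *m M mu beta *m rho)).
  by rewrite raddf_sum; apply: eq_bigr => mu _; rewrite /pr mxtrace_mulC !mulmxA.
by rewrite -mulmx_suml completeM mul1mx; case: hrho.
Qed.

Lemma amp_in01 mu n : 0 <= a mu n <= 1.
Proof.
rewrite amp_ge0 (le_trans (amp_le_pr mu n)) // -sum_pr (bigD1 mu) //= lerDl.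
by apply: sumr_ge0 => nu _; rewrite pr_sum_amp sumr_ge0 // => k _; apply: amp_ge0.
Qed.

Lemma amp_pr0 mu n : p mu = 0 -> a mu n = 0.
Proof. by move=> p0; apply/le_anti; rewrite amp_ge0 -p0 amp_le_pr. Qed.

(* [Q1] is a sum of nonnegative terms, so each of them vanishes: the post-measurement
   distributions [a_mu / p_mu] agree for all outcomes of positive probability. *)
Lemma Q1_eq0_proportional : Q1 U M rho beta = 0 ->
  forall mu nu n, a mu n * p nu = a nu n * p mu.
Proof.
move=> Q0 mu nu n.
have p_ge0 mu' : 0 <= p mu' by rewrite pr_sum_amp sumr_ge0 // => k _; apply: amp_ge0.
pose T n' mu' nu' := (p mu' * p nu' / 4) * (a mu' n' / p mu' - a nu' n' / p nu') ^+ 2.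
have T_ge0 n' mu' nu' : 0 < p mu' * p nu' -> 0 <= T n' mu' nu'.
  move=> pp_gt0; rewrite mulr_ge0 ?divr_ge0 ?(ltW pp_gt0) //.
  by rewrite -realEsqr rpredB // rpred_div // ger0_real // amp_ge0.
have [pp_gt0|] := boolP (0 < p mu * p nu); last first.
  rewrite lt_def mulr_ge0 // andbT negbK mulf_eq0 => /orP[] /eqP p0.
    by rewrite (amp_pr0 _ p0) p0 mul0r mulr0.
  by rewrite (amp_pr0 _ p0) p0 mul0r mulr0.
have sum_nu_ge0 n' mu' : 0 <= \sum_(nu' | 0 < p mu' * p nu') T n' mu' nu'.
  by apply: sumr_ge0 => nu' /T_ge0.
have Q0T : \sum_n' \sum_mu' \sum_(nu' | 0 < p mu' * p nu') T n' mu' nu' = 0 := Q0.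
have Q0n := @psumr_eq0P _ _ _ _
  (fun n' _ => sumr_ge0 _ (fun mu' _ => sum_nu_ge0 n' mu')) Q0T n isT.
have Q0nmu := @psumr_eq0P _ _ _ _ (fun mu' _ => sum_nu_ge0 n mu') Q0n mu isT.
have /eqP := @psumr_eq0P _ _ _ _ (fun nu' => T_ge0 n mu nu') Q0nmu nu pp_gt0.
rewrite /T mulf_eq0 gt_eqF ?divr_gt0 ?ltr0n //= expf_eq0 /= subr_eq0.
rewrite eqr_div => [/eqP //||]; apply: contraTneq pp_gt0 => ->.
  by rewrite mul0r ltxx.
by rewrite mulr0 ltxx.
Qed.

Lemma Q1_eq0_cross : Q1 U M rho beta = 0 ->
  forall mu k k', a mu k * \sum_nu a nu k' = a mu k' * \sum_nu a nu k.
Proof.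
move=> /Q1_eq0_proportional prop.
have factor mu n : a mu n = p mu * \sum_nu a nu n.
  rewrite -[LHS]mulr1 -sum_pr !mulr_sumr.
  by apply: eq_bigr => nu _; rewrite prop mulrC.
by move=> mu k k'; rewrite (factor mu k) (factor mu k') mulrAC.
Qed.

End Measurement.

Lemma braket_adj_lipschitz0 (R : realType) (d : nat) (F : R -> 'M[R[i]]_d)
    (v : 'cV[R[i]]_d) (ut : R) : 0 <= ut -> C2mx F ->
  exists K, 0 <= K /\ forall rho beta, density rho -> - ut <= beta <= ut ->
    `|braket (adjmx (F beta) *m v) rho - braket (adjmx (F 0) *m v) rho|
      <= (K * `|beta|)%:C.
Proof.
move=> ut0 C2F; have [L [L0 hL]] := C2mx_lipschitz0 ut0 C2F.
set w := adjmx (F 0) *m v.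
pose KC := L%:C * l1mx v * (d * d)%:R * ((L * ut)%:C * l1mx v + 2 * l1mx w).
have KC_ge0 : 0 <= KC by rewrite !(mulr_ge0, addr_ge0, l1mx_ge0, ler0c, ler0n).
exists (complex.Re KC); split; first by rewrite -lecR RRe_real ?ger0_real.
move=> rho beta hrho hbeta; rewrite rmorphM /= RRe_real ?ger0_real //.
set v' := adjmx (F beta) *m v.
have beta_le : `|beta| <= ut by rewrite ler_norml.
have vw_small : l1mx (v' - w) <= (L * `|beta|)%:C * l1mx v.
  rewrite /v' /w -mulmxBl -adjmxB; apply: (le_trans (l1mxM _ _)).
  by rewrite l1mx_adj ler_wpM2r ?l1mx_ge0 ?hL.
have v'w_le : l1mx v' + l1mx w <= (L * ut)%:C * l1mx v + 2 * l1mx w.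
  rewrite -{1}(subrK w v'); apply: (le_trans (lerD (l1mxD _ _) (lexx _))).
  rewrite -addrA mulr_natl mulr2n lerD // (le_trans vw_small) //.
  by rewrite ler_wpM2r ?l1mx_ge0 // lecR ler_wpM2l.
apply: (le_trans (l1mx_braketB _ _ _)).
have -> : KC * `|beta|%:C =
    (L * `|beta|)%:C * l1mx v * (d * d)%:R * ((L * ut)%:C * l1mx v + 2 * l1mx w).
  by rewrite /KC rmorphM /=; ring.
apply: ler_pM; rewrite ?mulr_ge0 ?addr_ge0 ?l1mx_ge0 //.
by apply: ler_pM; rewrite ?l1mx_ge0 ?l1mx_density.
Qed.

Section Perturbation.
Variables (R : realType) (d m : nat) (M : 'I_m -> R -> 'M[R[i]]_d) (U : 'M[R[i]]_d).
Variable c : 'I_m -> 'I_d -> R[i].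
Hypothesis unitaryU : adjmx U *m U = 1%:M.
Hypothesis diagM0 : forall mu, M mu 0 = \sum_n c mu n *: (col n U *m adjmx (col n U)).

Lemma amp_at0 rho mu k : amp U M rho 0 mu k = `|c mu k| ^+ 2 * braket (col k U) rho.
Proof. by rewrite /amp braket_mul_adj diagM0 adj_diag_mul_col // braketZ conjCK normCK. Qed.

Lemma sum_sqr_coef :
  (forall u, \sum_mu adjmx (M mu u) *m M mu u = 1%:M) -> forall n, \sum_mu `|c mu n| ^+ 2 = 1.
Proof.
move=> completeM n; have := congr1 (braket (col n U)) (completeM 0).
rewrite braket_col1 // braket_sum => <-; apply: eq_bigr => mu _.
have -> : adjmx (M mu 0) *m M mu 0 = adjmx (M mu 0) *m 1%:M *m adjmx (adjmx (M mu 0)).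
  by rewrite mulmx1 adjmxK.
by rewrite braket_mul_adj adjmxK diagM0 diag_mul_col // braketZ braket_col1 // mulr1 normCK mulrC.
Qed.

Lemma amp_perturbation (ut : R) : 0 <= ut -> (forall mu, C2mx (M mu)) ->
  exists K, 0 <= K /\ forall rho beta, density rho -> - ut <= beta <= ut ->
    forall mu k, `|amp U M rho beta mu k - `|c mu k| ^+ 2 * braket (col k U) rho|
      <= (K * `|beta|)%:C.
Proof.
move=> ut0 C2M.
pose P (t : 'I_m * 'I_d) K := forall rho beta, density rho -> - ut <= beta <= ut ->
  `|amp U M rho beta t.1 t.2 - amp U M rho 0 t.1 t.2| <= (K * `|beta|)%:C.
have [t K K' hK KK' rho beta hrho hb|[mu k]|K [K0 hK]] := @finite_uniform_bound _ _ P.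
- by apply: (le_trans (hK rho beta hrho hb)); rewrite lecR ler_wpM2r.
- have [K [K0 hK]] := braket_adj_lipschitz0 (col k U) ut0 (C2M mu).
  by exists K; split=> // rho beta; rewrite /amp !braket_mul_adj; apply: hK.
by exists K; split=> // rho beta hrho hb mu k; rewrite -amp_at0; apply: (hK (mu, k)).
Qed.

End Perturbation.

Lemma sqr_norm_separation (R : realType) (d m : nat) (c : 'I_m -> 'I_d -> R[i]) :
  (forall n1 n2, n1 != n2 -> exists mu, `|c mu n1| ^+ 2 != `|c mu n2| ^+ 2) ->
  exists δ : R, 0 < δ /\ forall k k', k != k' ->
    δ%:C <= \sum_mu `| `|c mu k| ^+ 2 - `|c mu k'| ^+ 2 |.
Proof.
move=> sep.
pose f (t : 'I_d * 'I_d) := complex.Re (\sum_mu `| `|c mu t.1| ^+ 2 - `|c mu t.2| ^+ 2 |).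
have f_real t : (f t)%:C = \sum_mu `| `|c mu t.1| ^+ 2 - `|c mu t.2| ^+ 2 |.
  by rewrite RRe_real // ger0_real // sumr_ge0.
have [[k k'] /= kk'|δ [δ0 hδ]] := @finite_pos_lower_bound _ _ [pred t | t.1 != t.2] f.
  rewrite -ltcR f_real; have [mu hmu] := sep k k' kk'.
  rewrite (bigD1 mu) //= ltr_wpDr ?sumr_ge0 // normr_gt0 subr_eq0.
  exact: hmu.
by exists δ; split=> // k k' kk'; rewrite -(f_real (k, k')) lecR; apply: (hδ (k, k')).
Qed.

Theorem lemma3 (R : realType) (d m : nat)
  (M : 'I_m -> R -> 'M[R[i]]_d)
  (U : 'M[R[i]]_d) (c : 'I_m -> 'I_d -> R[i])
  (hU : adjmx U *m U = 1%:M)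
  (hsum : forall u : R, \sum_(mu < m) adjmx (M mu u) *m M mu u = 1%:M)
  (hA1 : forall mu, M mu 0 = \sum_(n < d) c mu n *: (col n U *m adjmx (col n U)))
  (hA2 : forall n1 n2 : 'I_d, n1 != n2 ->
           exists mu, `|c mu n1| ^+ 2 != `|c mu n2| ^+ 2)
  (hA3 : forall mu, C2mx (M mu))
  (ut : R) (hut : 0 < ut) :
  exists C : R, 0 < C /\
    forall (rho : 'M[R[i]]_d) (beta : R),
      density rho -> - ut <= beta <= ut -> Q1 U M rho beta = 0 ->
      exists n : 'I_d, ((1 - C * `|beta|)%:C <= braket (col n U) rho).
Proof.
have [K [K0 amp_near]] := amp_perturbation hU hA1 (ltW hut) hA3.
have [δ [δ0 sep]] := sqr_norm_separation hA2.
set X := 2 * (d * d * m * (1 + m))%:R / δ.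
exists (X * K + 1); split.
  by apply: ltr_wpDl => //; rewrite !mulr_ge0 // invr_ge0 ltW.
move=> rho beta hrho hbeta hQ.
have [|||n concentrated] := concentration (q := fun k => braket (col k U) rho)
  _ _ (amp_in01 hU hsum beta hrho)
  (sum_sqr_coef hU hA1 hsum) (amp_near rho beta hrho hbeta)
  (Q1_eq0_cross hU hsum hrho hQ) (δ := δ%:C) _ sep.
- by move=> k; case: hrho.
- by rewrite -(mxtrace_braket hU); case: hrho.
- by rewrite ltcR.
exists n; apply: le_trans concentrated.
have -> : 1 - 2 * (d * d * m * (1 + m))%:R / δ%:C * (K * `|beta|)%:C =
    (1 - X * (K * `|beta|))%:C.
  by rewrite rmorphB rmorph1 !rmorphM /= fmorphV !rmorph_nat.
by rewrite lecR lerD2l lerN2 -/X mulrDl mul1r mulrA lerDl.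
Qed.
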